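(* Let $\alpha$ be a unit speed Frenet curve in $\mathbb{E}^3$ and $\beta$ an osculating mate of $\alpha$ with principal normal $\bar N$. The following are equivalent: (i) the principal normal indicatrix $\bar N$ of $\beta$ is a general helix; (ii) $\beta$ is a $C$-slant helix; (iii) $\alpha$ is a slant helix.
   Context: $\alpha:I\to\mathbb{E}^3$ is parametrized by arclength $s$, with Frenet frame $\{T,N,B\}$, curvature $\kappa>0$, torsion $\tau$. An osculating mate of $\alpha$ is a curve $\beta(s)=\int(x_1T+x_2N)ds$ with smooth $x_1,x_2$, $x_1^2+x_2^2=1$ and $\beta''\perp\mathrm{span}\{T,N\}$; $\beta$ is assumed to be a Frenet curve, unit speed in $s$, with Frenet frame $\{\bar T,\bar N,\bar B\}$, curvature $\bar\kappa$, torsion $\bar\tau$. The principal normal indicatrix of $\beta$ is the spherical curve $s\mapsto\bar N(s)$. A general helix is a curve whose tangent makes a constant angle with a fixed direction (equivalently torsion/curvature is constant). A slant helix is a curve whose principal normal makes a constant angle with a fixed direction. For a Frenet curve with frame $\{T,N,B\}$, curvature $k$, torsion $t$, the unit Darboux vector is $W=\frac{tT+kB}{\sqrt{k^2+t^2}}$, and $C=W\times N$; the curve is a $C$-slant helix if the unit vector $C$ makes a constant angle with a fixed direction. *)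

From Stdlib Require Import Reals.
From Coquelicot Require Import Coquelicot.
Open Scope R_scope.

Definition V3 : Type := (R * R * R)%type.
Definition v1 (v : V3) : R := fst (fst v).
Definition v2 (v : V3) : R := snd (fst v).
Definition v3 (v : V3) : R := snd v.
Definition mkV (a b c : R) : V3 := (a, b, c).

Definition vadd (u v : V3) : V3 := mkV (v1 u + v1 v) (v2 u + v2 v) (v3 u + v3 v).
Definition vscal (k : R) (v : V3) : V3 := mkV (k * v1 v) (k * v2 v) (k * v3 v).
Definition vdot (u v : V3) : R := v1 u * v1 v + v2 u * v2 v + v3 u * v3 v.
Definition vcross (u v : V3) : V3 :=
  mkV (v2 u * v3 v - v3 u * v2 v) (v3 u * v1 v - v1 u * v3 v) (v1 u * v2 v - v2 u * v1 v).
Definition vnorm (v : V3) : R := sqrt (vdot v v).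
Definition vzero : V3 := mkV 0 0 0.

Definition vD (f : R -> V3) (s : R) : V3 :=
  mkV (Derive (fun t => v1 (f t)) s) (Derive (fun t => v2 (f t)) s) (Derive (fun t => v3 (f t)) s).

Definition nonempty_open_interval (I : R -> Prop) : Prop :=
  (exists s, I s) /\
  (forall x y z, I x -> I z -> x <= y <= z -> I y) /\
  (forall x, I x -> exists eps, 0 < eps /\ forall y, Rabs (y - x) < eps -> I y).

Definition smooth_fun_on (I : R -> Prop) (f : R -> R) : Prop :=
  forall (n : nat) (s : R), I s -> ex_derive_n f n s.
Definition smooth_on (I : R -> Prop) (g : R -> V3) : Prop :=
  smooth_fun_on I (fun t => v1 (g t)) /\ smooth_fun_on I (fun t => v2 (g t)) /\
  smooth_fun_on I (fun t => v3 (g t)).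

(** Frenet apparatus of a unit speed curve g (arclength parameter s):
    T' = k N, N' = -k T + t B, B' = -t N. *)
Definition tangent (g : R -> V3) (s : R) : V3 := vD g s.
Definition curvature (g : R -> V3) (s : R) : R := vnorm (vD (tangent g) s).
Definition normal (g : R -> V3) (s : R) : V3 := vscal (/ curvature g s) (vD (tangent g) s).
Definition binormal (g : R -> V3) (s : R) : V3 := vcross (tangent g s) (normal g s).
Definition torsion (g : R -> V3) (s : R) : R := vdot (vD (normal g) s) (binormal g s).

Definition darboux_unit (g : R -> V3) (s : R) : V3 :=
  vscal (/ sqrt (curvature g s ^ 2 + torsion g s ^ 2))
    (vadd (vscal (torsion g s) (tangent g s)) (vscal (curvature g s) (binormal g s))).
Definition Cvec (g : R -> V3) (s : R) : V3 := vcross (darboux_unit g s) (normal g s).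

Definition unit_speed_frenet_on (I : R -> Prop) (g : R -> V3) : Prop :=
  smooth_on I g /\
  (forall s, I s -> vnorm (tangent g s) = 1) /\
  (forall s, I s -> 0 < curvature g s).

Definition osculating_mate_on (I : R -> Prop) (alpha beta : R -> V3) : Prop :=
  exists x1 x2 : R -> R,
    smooth_fun_on I x1 /\ smooth_fun_on I x2 /\
    (forall s, I s -> x1 s ^ 2 + x2 s ^ 2 = 1) /\
    (forall s, I s -> vD beta s =
        vadd (vscal (x1 s) (tangent alpha s)) (vscal (x2 s) (normal alpha s))) /\
    (forall s, I s -> vdot (vD (vD beta) s) (tangent alpha s) = 0 /\
                      vdot (vD (vD beta) s) (normal alpha s) = 0) /\
    unit_speed_frenet_on I beta.

Definition general_helix_on (I : R -> Prop) (g : R -> V3) : Prop :=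
  (forall s, I s -> vD g s <> vzero) /\
  exists (u : V3) (c : R), vnorm u = 1 /\
    forall s, I s -> vdot (vscal (/ vnorm (vD g s)) (vD g s)) u = c.

Definition slant_helix_on (I : R -> Prop) (g : R -> V3) : Prop :=
  exists (u : V3) (c : R), vnorm u = 1 /\ forall s, I s -> vdot (normal g s) u = c.

Definition C_slant_helix_on (I : R -> Prop) (g : R -> V3) : Prop :=
  exists (u : V3) (c : R), vnorm u = 1 /\ forall s, I s -> vdot (Cvec g s) u = c.

From Stdlib Require Import Reals Lra.
From Coquelicot Require Import Coquelicot.
Open Scope R_scope.

(* Write beta' = x1 T + x2 N in the Frenet frame (T, N, B) of alpha.  Since beta'' is
   orthogonal to T and N, beta'' = x2 tau B; hence beta has curvature |x2 tau| (so x2 and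
   tau never vanish), principal normal Nb = e B with e = sign (x2 tau) locally constant,
   Nb' = - e tau N and torsion x1 tau.  Using x1^2 + x2^2 = 1, the unit Darboux vector of
   beta is sign(tau) T, so C = W x Nb and the unit tangent Nb' / |Nb'| of the indicatrix
   both equal - sign(x2) N.  As x2 is continuous and nowhere zero on the interval, this
   sign is constant, so each of the three constant-angle conditions is one for N. *)

Lemma vec_ext (u v : V3) : v1 u = v1 v -> v2 u = v2 v -> v3 u = v3 v -> u = v.
Proof. destruct u as [[? ?] ?], v as [[? ?] ?]; unfold v1, v2, v3; simpl; congruence. Qed.

(* [cbn [fst snd]] rather than [simpl], which would unfold [Derive] inside [vD]. *)
Ltac vexpand :=
  repeat match goal with v : V3 |- _ => let a := fresh "a" in let b := fresh "b" in
    let c := fresh "c" in destruct v as [[a b] c] end;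
  unfold vadd, vscal, vdot, vcross, vnorm, vzero, mkV, v1, v2, v3; cbn [fst snd].

Ltac vring := first [ apply vec_ext; vexpand; ring | vexpand; ring ].

Lemma vdot_comm (u v : V3) : vdot u v = vdot v u.
Proof. vring. Qed.

Lemma vdot_addl (u v w : V3) : vdot (vadd u v) w = vdot u w + vdot v w.
Proof. vring. Qed.

Lemma vdot_scall (k : R) (u w : V3) : vdot (vscal k u) w = k * vdot u w.
Proof. vring. Qed.

Lemma vscal_scal (a b : R) (v : V3) : vscal a (vscal b v) = vscal (a * b) v.
Proof. vring. Qed.

Lemma vdot_cross_l (u v : V3) : vdot u (vcross u v) = 0.
Proof. vring. Qed.

Lemma vdot_cross_r (u v : V3) : vdot v (vcross u v) = 0.
Proof. vring. Qed.

Lemma vdot_cross_cross (u v : V3) :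
  vdot (vcross u v) (vcross u v) = vdot u u * vdot v v - vdot u v * vdot u v.
Proof. vring. Qed.

Lemma vdot_self_ge0 (v : V3) : 0 <= vdot v v.
Proof. vexpand; nra. Qed.

Lemma vnorm_scal_unit (k : R) (v : V3) : vdot v v = 1 -> vnorm (vscal k v) = Rabs k.
Proof.
  intros Hv. unfold vnorm. rewrite vdot_scall, vdot_comm, vdot_scall, Hv, Rmult_1_r.
  apply sqrt_Rsqr_abs.
Qed.

Definition orthonormal2 (T N : V3) : Prop := vdot T T = 1 /\ vdot N N = 1 /\ vdot T N = 0.

Definition frame_comb (T N : V3) (a b c : R) : V3 :=
  vadd (vscal a T) (vadd (vscal b N) (vscal c (vcross T N))).

Lemma frame_comb_B (T N : V3) : vcross T N = frame_comb T N 0 0 1. Proof. unfold frame_comb; vring. Qed.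

Lemma frame_comb_scal (T N : V3) (k a b c : R) :
  vscal k (frame_comb T N a b c) = frame_comb T N (k * a) (k * b) (k * c).
Proof. unfold frame_comb; vring. Qed.

Lemma frame_comb_add (T N : V3) (a b c a' b' c' : R) :
  vadd (frame_comb T N a b c) (frame_comb T N a' b' c') =
  frame_comb T N (a + a') (b + b') (c + c').
Proof. unfold frame_comb; vring. Qed.

Lemma frame_comb_dot (T N : V3) (HTN : orthonormal2 T N) (a b c a' b' c' : R) :
  vdot (frame_comb T N a b c) (frame_comb T N a' b' c') = a * a' + b * b' + c * c'.
Proof.
  destruct HTN as [hT [hN hTN]].
  transitivity (a * a' * vdot T T + (a * b' + b * a') * vdot T N + b * b' * vdot N N
    + c * c' * (vdot T T * vdot N N - vdot T N * vdot T N)).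
  - unfold frame_comb; vring.
  - rewrite hT, hN, hTN; ring.
Qed.

Lemma frame_comb_norm (T N : V3) (HTN : orthonormal2 T N) (a b c : R) :
  vnorm (frame_comb T N a b c) = sqrt (a * a + b * b + c * c).
Proof. unfold vnorm; rewrite frame_comb_dot by exact HTN; reflexivity. Qed.

Lemma frame_comb_cross (T N : V3) (HTN : orthonormal2 T N) (a b c a' b' c' : R) :
  vcross (frame_comb T N a b c) (frame_comb T N a' b' c') =
  frame_comb T N (b * c' - c * b') (c * a' - a * c') (a * b' - b * a').
Proof.
  destruct HTN as [hT [hN hTN]].
  transitivity (frame_comb T N
    ((b * c' - c * b') * vdot N N - (c * a' - a * c') * vdot T N)
    ((c * a' - a * c') * vdot T T - (b * c' - c * b') * vdot T N) (a * b' - b * a')).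
  - unfold frame_comb; vring.
  - rewrite hT, hN, hTN; f_equal; ring.
Qed.

(* Lagrange's identity, where |T x N|^2 = 1. *)
Lemma frame_comb_coords (T N : V3) (HTN : orthonormal2 T N) (v : V3) :
  v = frame_comb T N (vdot v T) (vdot v N) (vdot v (vcross T N)).
Proof.
  destruct HTN as [hT [hN hTN]].
  transitivity (vscal (vdot T T * vdot N N - vdot T N * vdot T N) v).
  - rewrite hT, hN, hTN. vring.
  - transitivity (frame_comb T N (vdot N N * vdot v T - vdot T N * vdot v N)
      (vdot T T * vdot v N - vdot T N * vdot v T) (vdot v (vcross T N))).
    + unfold frame_comb; vring.
    + rewrite hT, hN, hTN; f_equal; ring.
Qed.

Definition vderivable (F : R -> V3) (s : R) : Prop :=
  ex_derive (fun t => v1 (F t)) s /\ ex_derive (fun t => v2 (F t)) s /\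
  ex_derive (fun t => v3 (F t)) s.

(* Coquelicot's [ex_derive_plus] is stated for the [plus] of a normed module and does
   not unify with [Rplus] under [apply]. *)
Lemma ex_derive_Rplus (f g : R -> R) (x : R) :
  ex_derive f x -> ex_derive g x -> ex_derive (fun t => f t + g t) x.
Proof. exact (ex_derive_plus f g x). Qed.

Lemma ex_derive_Rminus (f g : R -> R) (x : R) :
  ex_derive f x -> ex_derive g x -> ex_derive (fun t => f t - g t) x.
Proof. exact (ex_derive_minus f g x). Qed.

Section VectorCalculus.
Variables (F G : R -> V3) (s : R).
Hypotheses (HF : vderivable F s) (HG : vderivable G s).

Lemma ex_derive_vdot : ex_derive (fun t => vdot (F t) (G t)) s.
Proof.
  destruct HF as [f1 [f2 f3]], HG as [g1 [g2 g3]]. unfold vdot.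
  apply ex_derive_Rplus; [apply ex_derive_Rplus|]; apply ex_derive_mult; auto.
Qed.

Lemma Derive_vdot :
  Derive (fun t => vdot (F t) (G t)) s = vdot (vD F s) (G s) + vdot (F s) (vD G s).
Proof.
  destruct HF as [f1 [f2 f3]], HG as [g1 [g2 g3]]. unfold vdot.
  rewrite Derive_plus; [|apply ex_derive_Rplus; apply ex_derive_mult; auto|apply ex_derive_mult; auto].
  rewrite Derive_plus by (apply ex_derive_mult; auto).
  rewrite !Derive_mult by auto.
  unfold vD, mkV, v1, v2, v3; cbn [fst snd]; ring.
Qed.

Lemma vD_add : vD (fun t => vadd (F t) (G t)) s = vadd (vD F s) (vD G s).
Proof.
  destruct HF as [f1 [f2 f3]], HG as [g1 [g2 g3]].
  apply vec_ext; unfold vD, vadd, mkV, v1, v2, v3; cbn [fst snd]; rewrite Derive_plus; auto.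
Qed.

Lemma vderivable_cross : vderivable (fun t => vcross (F t) (G t)) s.
Proof.
  destruct HF as [f1 [f2 f3]], HG as [g1 [g2 g3]].
  split; [|split]; apply ex_derive_Rminus; apply ex_derive_mult; auto.
Qed.

Variable f : R -> R.
Hypothesis Hf : ex_derive f s.

Lemma vderivable_scal : vderivable (fun t => vscal (f t) (F t)) s.
Proof.
  destruct HF as [f1 [f2 f3]]. split; [|split]; apply ex_derive_mult; auto.
Qed.

Lemma vD_scal :
  vD (fun t => vscal (f t) (F t)) s = vadd (vscal (Derive f s) (F s)) (vscal (f s) (vD F s)).
Proof.
  destruct HF as [f1 [f2 f3]].
  apply vec_ext; unfold vD, vadd, vscal, mkV, v1, v2, v3; cbn [fst snd]; rewrite Derive_mult; auto.
Qed.

End VectorCalculus.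

Section LocalCalculus.
Variable I : R -> Prop.
Hypothesis HI : open I.

Lemma locally_on (s : R) (P : R -> Prop) : I s -> (forall t, I t -> P t) -> locally s P.
Proof. intros Hs HP. exact (filter_imp I P HP (HI s Hs)). Qed.

Lemma Derive_ext_on (f g : R -> R) (s : R) :
  I s -> (forall t, I t -> f t = g t) -> Derive f s = Derive g s.
Proof. intros Hs H. apply Derive_ext_loc, (locally_on s _ Hs H). Qed.

Lemma vD_ext_on (F G : R -> V3) (s : R) :
  I s -> (forall t, I t -> F t = G t) -> vD F s = vD G s.
Proof.
  intros Hs H. unfold vD.
  f_equal; apply Derive_ext_on; auto; intros t Ht; rewrite (H t Ht); reflexivity.
Qed.

Lemma Derive_const_on (f : R -> R) (c s : R) :
  I s -> (forall t, I t -> f t = c) -> Derive f s = 0.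
Proof. intros Hs H. rewrite (Derive_ext_on f (fun _ => c) s Hs H). apply Derive_const. Qed.

Lemma Derive_sqr_one_on (f : R -> R) (s : R) :
  I s -> ex_derive f s -> (forall t, I t -> f t * f t = 1) -> Derive f s = 0.
Proof.
  intros Hs Hf H.
  assert (H0 : Derive (fun t => f t * f t) s = 0) by exact (Derive_const_on _ 1 s Hs H).
  rewrite Derive_mult in H0 by assumption.
  specialize (H s Hs). nra.
Qed.

Lemma vdot_vD_const_on (F G : R -> V3) (c s : R) :
  I s -> vderivable F s -> vderivable G s -> (forall t, I t -> vdot (F t) (G t) = c) ->
  vdot (vD F s) (G s) + vdot (F s) (vD G s) = 0.
Proof.
  intros Hs HF HG H. rewrite <- Derive_vdot by assumption.
  exact (Derive_const_on _ c s Hs H).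
Qed.

End LocalCalculus.

Section Frenet.
Variable I : R -> Prop.
Hypothesis HI : open I.
Variable g : R -> V3.
Hypothesis Hg : unit_speed_frenet_on I g.

Lemma tangent_vderivable (s : R) : I s -> vderivable (tangent g) s.
Proof.
  intros Hs. destruct Hg as [[h1 [h2 h3]] _].
  exact (conj (h1 2%nat s Hs) (conj (h2 2%nat s Hs) (h3 2%nat s Hs))).
Qed.

Lemma vD_tangent_vderivable (s : R) : I s -> vderivable (vD (tangent g)) s.
Proof.
  intros Hs. destruct Hg as [[h1 [h2 h3]] _].
  exact (conj (h1 3%nat s Hs) (conj (h2 3%nat s Hs) (h3 3%nat s Hs))).
Qed.

Lemma curvature_pos (s : R) : I s -> 0 < curvature g s.
Proof. intros Hs. destruct Hg as [_ [_ h]]. exact (h s Hs). Qed.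

Lemma tangent_unit (s : R) : I s -> vdot (tangent g s) (tangent g s) = 1.
Proof.
  intros Hs. destruct Hg as [_ [h _]]. specialize (h s Hs). unfold vnorm in h.
  rewrite <- (sqrt_sqrt _ (vdot_self_ge0 _)), h. ring.
Qed.

Lemma vD_tangent (s : R) : I s -> vD (tangent g) s = vscal (curvature g s) (normal g s).
Proof.
  intros Hs. unfold normal. rewrite vscal_scal, Rinv_r by (apply Rgt_not_eq, curvature_pos, Hs).
  vring.
Qed.

Lemma curvature_ex_derive (s : R) : I s -> ex_derive (curvature g) s.
Proof.
  intros Hs. pose proof (curvature_pos s Hs) as hk.
  pose proof (vD_tangent_vderivable s Hs) as HT'.
  destruct (ex_derive_vdot _ _ s HT' HT') as [df hdf].
  eexists. apply (is_derive_sqrt _ _ _ hdf).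
  apply Rnot_le_lt. intros hle. unfold curvature, vnorm in hk.
  rewrite sqrt_neg_0 in hk by exact hle. lra.
Qed.

Lemma normal_vderivable (s : R) : I s -> vderivable (normal g) s.
Proof.
  intros Hs. apply vderivable_scal; [exact (vD_tangent_vderivable s Hs)|].
  apply ex_derive_inv; [exact (curvature_ex_derive s Hs)|].
  apply Rgt_not_eq, curvature_pos, Hs.
Qed.

Lemma binormal_vderivable (s : R) : I s -> vderivable (binormal g) s.
Proof.
  intros Hs. apply vderivable_cross; [exact (tangent_vderivable s Hs)|exact (normal_vderivable s Hs)].
Qed.

Lemma frenet_orthonormal (s : R) : I s -> orthonormal2 (tangent g s) (normal g s).
Proof.
  intros Hs. pose proof (curvature_pos s Hs) as hk. split; [|split].
  - exact (tangent_unit s Hs).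
  - unfold normal. rewrite vdot_scall, vdot_comm, vdot_scall.
    unfold curvature, vnorm in *.
    rewrite <- (sqrt_sqrt _ (vdot_self_ge0 (vD (tangent g) s))) at 3.
    field. lra.
  - pose proof (vdot_vD_const_on I HI _ _ 1 s Hs (tangent_vderivable s Hs)
                  (tangent_vderivable s Hs) tangent_unit) as h.
    rewrite (vdot_comm (tangent g s)), vD_tangent, vdot_scall in h by exact Hs.
    rewrite vdot_comm. nra.
Qed.

Lemma binormal_unit (s : R) : I s -> vdot (binormal g s) (binormal g s) = 1.
Proof.
  intros Hs. destruct (frenet_orthonormal s Hs) as [hT [hN hTN]].
  unfold binormal. rewrite vdot_cross_cross, hT, hN, hTN. ring.
Qed.

Lemma vD_binormal (s : R) : I s -> vD (binormal g) s = vscal (- torsion g s) (normal g s).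
Proof.
  intros Hs. pose proof (frenet_orthonormal s Hs) as HTN.
  pose proof (binormal_vderivable s Hs) as HB.
  assert (HBT : vdot (vD (binormal g) s) (tangent g s) = 0).
  { assert (H0 : forall t, I t -> vdot (binormal g t) (tangent g t) = 0).
    { intros t _. rewrite vdot_comm. apply vdot_cross_l. }
    pose proof (vdot_vD_const_on I HI _ _ 0 s Hs HB (tangent_vderivable s Hs) H0) as h.
    rewrite vD_tangent, (vdot_comm (binormal g s)), vdot_scall in h by exact Hs.
    assert (HNB : vdot (normal g s) (binormal g s) = 0) by apply vdot_cross_r.
    rewrite HNB in h. lra. }
  assert (HBN : vdot (vD (binormal g) s) (normal g s) = - torsion g s).
  { pose proof (vdot_vD_const_on I HI _ _ 0 s Hs HB (normal_vderivable s Hs)) as h.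
    unfold torsion. rewrite (vdot_comm (binormal g s)) in h.
    enough (H0 : forall t, I t -> vdot (binormal g t) (normal g t) = 0) by (specialize (h H0); lra).
    intros t _. rewrite vdot_comm. apply vdot_cross_r. }
  assert (HBB : vdot (vD (binormal g) s) (binormal g s) = 0).
  { pose proof (vdot_vD_const_on I HI _ _ 1 s Hs HB HB binormal_unit) as h.
    rewrite (vdot_comm (binormal g s)) in h. lra. }
  rewrite (frame_comb_coords _ _ HTN (vD (binormal g) s)). fold (binormal g s).
  rewrite HBT, HBN, HBB. unfold frame_comb. vring.
Qed.

End Frenet.

Lemma Rabs_mul_sign (x : R) : Rabs x * sign x = x.
Proof.
  destruct (Rtotal_order x 0) as [h|[h|h]].
  - rewrite Rabs_left, sign_eq_m1 by exact h. ring.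
  - subst x. rewrite sign_0. ring.
  - rewrite Rabs_right, sign_eq_1 by lra. ring.
Qed.

Lemma Rinv_Rabs_mul (x : R) : x <> 0 -> / Rabs x * x = sign x.
Proof.
  intros hx. rewrite <- (Rabs_mul_sign x) at 2.
  rewrite <- Rmult_assoc, Rinv_l, Rmult_1_l by now apply Rabs_no_R0. reflexivity.
Qed.

Lemma sign_sqr (x : R) : x <> 0 -> sign x * sign x = 1.
Proof.
  intros hx. destruct (Rtotal_order x 0) as [h|[h|h]]; [|contradiction|].
  - rewrite sign_eq_m1 by exact h. ring.
  - rewrite sign_eq_1 by exact h. ring.
Qed.

Lemma sign_mult_cancel_r (x y : R) : y <> 0 -> sign (x * y) * sign y = sign x.
Proof. intros hy. rewrite sign_mult, Rmult_assoc, sign_sqr by exact hy. ring. Qed.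

Lemma sign_const_segment (f : R -> R) (a b : R) :
  a <= b -> (forall x, a <= x <= b -> continuity_pt f x) ->
  (forall x, a <= x <= b -> f x <> 0) -> sign (f a) = sign (f b).
Proof.
  intros hab hc hnz.
  destruct (Rle_lt_or_eq_dec a b hab) as [hlt|<-]; [|reflexivity].
  assert (ha : a <= a <= b) by lra. assert (hb : a <= b <= b) by lra.
  destruct (Rlt_or_le (f a) 0) as [fa|fa]; destruct (Rlt_or_le (f b) 0) as [fb|fb].
  - rewrite !sign_eq_m1 by assumption. reflexivity.
  - exfalso. assert (fb' : 0 < f b) by (pose proof (hnz b hb); lra).
    destruct (Ranalysis5.IVT_interv f a b hc hlt fa fb') as [z [hz fz]].
    exact (hnz z hz fz).
  - exfalso. assert (fa' : 0 < f a) by (pose proof (hnz a ha); lra).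
    assert (hc' : forall x, a <= x <= b -> continuity_pt (fun t => - f t) x)
      by (intros x hx; apply continuity_pt_opp, hc, hx).
    destruct (Ranalysis5.IVT_interv (fun t => - f t) a b hc' hlt) as [z [hz fz]]; try lra.
    apply (hnz z hz). lra.
  - assert (0 < f a) by (pose proof (hnz a ha); lra).
    assert (0 < f b) by (pose proof (hnz b hb); lra).
    rewrite !sign_eq_1 by assumption. reflexivity.
Qed.

Lemma sign_const_on_interval (I : R -> Prop) (f : R -> R) :
  (forall x y z, I x -> I z -> x <= y <= z -> I y) ->
  (forall x, I x -> continuity_pt f x) -> (forall x, I x -> f x <> 0) ->
  forall s t, I s -> I t -> sign (f s) = sign (f t).
Proof.
  intros Hconv hc hnz.
  assert (H : forall s t, I s -> I t -> s <= t -> sign (f s) = sign (f t)).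
  { intros s t Hs Ht hst. apply sign_const_segment; [exact hst| |];
      intros x hx; [apply hc|apply hnz]; exact (Hconv s x t Hs Ht hx). }
  intros s t Hs Ht. destruct (Rle_or_lt s t) as [h|h]; [auto|symmetry; apply H; auto; lra].
Qed.

Definition const_angle_on (I : R -> Prop) (F : R -> V3) : Prop :=
  exists (u : V3) (c : R), vnorm u = 1 /\ forall s, I s -> vdot (F s) u = c.

Lemma const_angle_on_scal (I : R -> Prop) (F G : R -> V3) (k : R) :
  k <> 0 -> (forall s, I s -> F s = vscal k (G s)) ->
  const_angle_on I F <-> const_angle_on I G.
Proof.
  intros hk HFG. split; intros [u [c [hu h]]].
  - exists u, (c / k). split; [exact hu|]. intros s Hs.
    rewrite <- (h s Hs), HFG, vdot_scall by exact Hs. field. exact hk.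
  - exists u, (k * c). split; [exact hu|]. intros s Hs.
    rewrite HFG, vdot_scall, h by exact Hs. reflexivity.
Qed.

Section OsculatingMate.
Variable I : R -> Prop.
Hypothesis HI : open I.
Variables (alpha beta : R -> V3) (x1 x2 : R -> R).
Hypothesis Halpha : unit_speed_frenet_on I alpha.
Hypothesis Hbeta : unit_speed_frenet_on I beta.
Hypotheses (Hx1 : smooth_fun_on I x1) (Hx2 : smooth_fun_on I x2).
Hypothesis Hx12 : forall s, I s -> x1 s ^ 2 + x2 s ^ 2 = 1.
Hypothesis HvD : forall s, I s ->
  vD beta s = vadd (vscal (x1 s) (tangent alpha s)) (vscal (x2 s) (normal alpha s)).
Hypothesis Hperp : forall s, I s ->
  vdot (vD (vD beta) s) (tangent alpha s) = 0 /\ vdot (vD (vD beta) s) (normal alpha s) = 0.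

Local Notation T := (tangent alpha).
Local Notation N := (normal alpha).
Local Notation B := (binormal alpha).
Local Notation tau := (torsion alpha).
Local Notation frame s := (frame_comb (T s) (N s)).

Lemma mate_vD_vD (s : R) : I s -> vD (vD beta) s = vscal (x2 s * tau s) (B s).
Proof.
  intros Hs. pose proof (frenet_orthonormal I HI alpha Halpha s Hs) as HTN.
  destruct (Hperp s Hs) as [hT hN].
  assert (hB : vdot (vD (vD beta) s) (B s) = x2 s * tau s).
  { rewrite (vD_ext_on I HI _ _ s Hs HvD).
    pose proof (tangent_vderivable I alpha Halpha s Hs) as dT.
    pose proof (normal_vderivable I alpha Halpha s Hs) as dN.
    pose proof (Hx1 1%nat s Hs) as dx1. pose proof (Hx2 1%nat s Hs) as dx2.
    rewrite vD_add, !vD_scal by auto using vderivable_scal.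
    rewrite (vD_tangent I alpha Halpha s Hs).
    rewrite !vdot_addl, !vdot_scall.
    assert (hTB : vdot (T s) (B s) = 0) by apply vdot_cross_l.
    assert (hNB : vdot (N s) (B s) = 0) by apply vdot_cross_r.
    rewrite hTB, hNB. unfold torsion. ring. }
  rewrite (frame_comb_coords _ _ HTN (vD (vD beta) s)). fold (B s).
  rewrite hT, hN, hB. unfold frame_comb, binormal. vring.
Qed.

Lemma mate_curvature (s : R) : I s -> curvature beta s = Rabs (x2 s * tau s).
Proof.
  intros Hs. unfold curvature. change (vD (tangent beta) s) with (vD (vD beta) s).
  rewrite mate_vD_vD by exact Hs. apply vnorm_scal_unit, (binormal_unit I HI alpha Halpha s Hs).
Qed.

Lemma mate_x2_torsion_neq0 (s : R) : I s -> x2 s * tau s <> 0.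
Proof.
  intros Hs H0. pose proof (curvature_pos I beta Hbeta s Hs) as hk.
  rewrite mate_curvature, H0, Rabs_R0 in hk by exact Hs. lra.
Qed.

Lemma mate_torsion_neq0 (s : R) : I s -> tau s <> 0.
Proof. intros Hs H0. apply (mate_x2_torsion_neq0 s Hs). rewrite H0. ring. Qed.

Lemma mate_tangent (s : R) : I s -> tangent beta s = frame s (x1 s) (x2 s) 0.
Proof. intros Hs. unfold tangent at 1. rewrite HvD by exact Hs. unfold frame_comb. vring. Qed.

Lemma mate_normal (s : R) : I s -> normal beta s = frame s 0 0 (sign (x2 s * tau s)).
Proof.
  intros Hs. unfold normal at 1. change (vD (tangent beta) s) with (vD (vD beta) s).
  rewrite mate_curvature, mate_vD_vD, vscal_scal, Rinv_Rabs_mul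
    by (exact Hs || exact (mate_x2_torsion_neq0 s Hs)).
  unfold frame_comb, binormal. vring.
Qed.

(* Nb = e B with e^2 = 1 on I, so e' = 0 and Nb' = e B' = - e tau N. *)
Lemma mate_vD_normal (s : R) :
  I s -> vD (normal beta) s = frame s 0 (- (sign (x2 s * tau s) * tau s)) 0.
Proof.
  intros Hs.
  set (e u := vdot (normal beta u) (B u)).
  assert (He : forall u, I u -> e u = sign (x2 u * tau u)).
  { intros u Hu. unfold e, binormal. rewrite mate_normal, (frame_comb_B (T u) (N u)) by exact Hu.
    rewrite frame_comb_dot by exact (frenet_orthonormal I HI alpha Halpha u Hu). ring. }
  assert (HN : forall u, I u -> normal beta u = vscal (e u) (B u)).
  { intros u Hu. rewrite He, mate_normal by exact Hu. unfold frame_comb, binormal. vring. }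
  assert (He2 : forall u, I u -> e u * e u = 1).
  { intros u Hu. rewrite He by exact Hu. apply sign_sqr, mate_x2_torsion_neq0, Hu. }
  pose proof (binormal_vderivable I alpha Halpha s Hs) as dB.
  assert (de : ex_derive e s)
    by exact (ex_derive_vdot _ _ s (normal_vderivable I beta Hbeta s Hs) dB).
  rewrite (vD_ext_on I HI _ _ s Hs HN), vD_scal by assumption.
  rewrite (Derive_sqr_one_on I HI e s Hs de He2), (vD_binormal I HI alpha Halpha s Hs), He by exact Hs.
  unfold frame_comb. vring.
Qed.

Lemma mate_torsion (s : R) : I s -> torsion beta s = x1 s * tau s.
Proof.
  intros Hs. pose proof (frenet_orthonormal I HI alpha Halpha s Hs) as HTN.
  unfold torsion at 1, binormal.
  rewrite mate_vD_normal, mate_tangent, mate_normal, frame_comb_cross, frame_comb_dot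
    by (exact Hs || exact HTN).
  transitivity (x1 s * tau s * (sign (x2 s * tau s) * sign (x2 s * tau s))); [ring|].
  rewrite sign_sqr by exact (mate_x2_torsion_neq0 s Hs). ring.
Qed.

(* |x2 tau| sign (x2 tau) = x2 tau makes the N-components of (torsion beta) Tb and
   (curvature beta) Bb cancel, and x1^2 + x2^2 = 1 leaves tau T. *)
Lemma mate_darboux_unit (s : R) : I s -> darboux_unit beta s = frame s (sign (tau s)) 0 0.
Proof.
  intros Hs. pose proof (frenet_orthonormal I HI alpha Halpha s Hs) as HTN.
  pose proof (Hx12 s Hs) as h12. pose proof (Rabs_mul_sign (x2 s * tau s)) as hk.
  unfold darboux_unit, binormal.
  rewrite mate_curvature, mate_torsion, mate_tangent, mate_normal by exact Hs.
  rewrite frame_comb_cross, !frame_comb_scal, frame_comb_add, frame_comb_scal by exact HTN.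
  assert (hsqrt : sqrt (Rabs (x2 s * tau s) ^ 2 + (x1 s * tau s) ^ 2) = Rabs (tau s)).
  { rewrite pow2_abs, <- sqrt_Rsqr_abs. f_equal. unfold Rsqr.
    transitivity (tau s * tau s * (x1 s ^ 2 + x2 s ^ 2)); [ring|].
    rewrite h12. ring. }
  rewrite hsqrt. set (A := Rabs (x2 s * tau s)) in *. set (E := sign (x2 s * tau s)) in *.
  f_equal.
  - transitivity (/ Rabs (tau s) * (tau s * (x1 s ^ 2 + x2 s ^ 2) + x2 s * (A * E - x2 s * tau s)));
      [ring|].
    rewrite hk, h12, Rmult_1_r, Rminus_diag, Rmult_0_r, Rplus_0_r.
    exact (Rinv_Rabs_mul _ (mate_torsion_neq0 s Hs)).
  - transitivity (- (/ Rabs (tau s) * x1 s * (A * E - x2 s * tau s))); [ring|].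
    rewrite hk, Rminus_diag. ring.
  - ring.
Qed.

Lemma mate_Cvec (s : R) : I s -> Cvec beta s = vscal (- sign (x2 s)) (N s).
Proof.
  intros Hs. pose proof (frenet_orthonormal I HI alpha Halpha s Hs) as HTN.
  unfold Cvec. rewrite mate_darboux_unit, mate_normal, frame_comb_cross by (exact Hs || exact HTN).
  rewrite <- (sign_mult_cancel_r (x2 s) (tau s)) by exact (mate_torsion_neq0 s Hs).
  unfold frame_comb. vring.
Qed.

Lemma mate_vD_normal_norm (s : R) : I s -> vnorm (vD (normal beta) s) = Rabs (tau s).
Proof.
  intros Hs. pose proof (frenet_orthonormal I HI alpha Halpha s Hs) as HTN.
  rewrite mate_vD_normal, frame_comb_norm by (exact Hs || exact HTN).
  rewrite <- sqrt_Rsqr_abs. f_equal. unfold Rsqr.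
  transitivity (tau s * tau s * (sign (x2 s * tau s) * sign (x2 s * tau s))); [ring|].
  rewrite sign_sqr by exact (mate_x2_torsion_neq0 s Hs). ring.
Qed.

Lemma mate_vD_normal_neq0 (s : R) : I s -> vD (normal beta) s <> vzero.
Proof.
  intros Hs H0. pose proof (mate_vD_normal_norm s Hs) as hn.
  rewrite H0 in hn. unfold vnorm, vdot, vzero, v1, v2, v3, mkV in hn. cbn [fst snd] in hn.
  rewrite Rmult_0_l, !Rplus_0_r, sqrt_0 in hn.
  exact (Rabs_no_R0 _ (mate_torsion_neq0 s Hs) (eq_sym hn)).
Qed.

Lemma mate_normal_unit_tangent (s : R) :
  I s -> vscal (/ vnorm (vD (normal beta) s)) (vD (normal beta) s) = vscal (- sign (x2 s)) (N s).
Proof.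
  intros Hs. rewrite mate_vD_normal_norm, mate_vD_normal by exact Hs.
  rewrite <- (sign_mult_cancel_r (x2 s) (tau s)), <- (Rinv_Rabs_mul (tau s))
    by exact (mate_torsion_neq0 s Hs).
  unfold frame_comb. vring.
Qed.

Hypothesis Hconv : forall x y z, I x -> I z -> x <= y <= z -> I y.

Lemma mate_sign_x2_const (s t : R) : I s -> I t -> sign (x2 s) = sign (x2 t).
Proof.
  apply (sign_const_on_interval I x2 Hconv).
  - intros u Hu. apply derivable_continuous_pt, ex_derive_Reals_0, (Hx2 1%nat u Hu).
  - intros u Hu H0. apply (mate_x2_torsion_neq0 u Hu). rewrite H0. ring.
Qed.

Lemma mate_helix_iff (s0 : R) : I s0 ->
  (general_helix_on I (normal beta) <-> C_slant_helix_on I beta) /\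
  (C_slant_helix_on I beta <-> slant_helix_on I alpha).
Proof.
  intros Hs0.
  assert (Hslant : forall F, (forall s, I s -> F s = vscal (- sign (x2 s)) (N s)) ->
            const_angle_on I F <-> slant_helix_on I alpha).
  { intros F HF. apply (const_angle_on_scal I F N (- sign (x2 s0))).
    - apply Ropp_neq_0_compat, sign_neq_0. intros H0.
      apply (mate_x2_torsion_neq0 s0 Hs0). rewrite H0. ring.
    - intros s Hs. rewrite HF, (mate_sign_x2_const s s0) by assumption. reflexivity. }
  pose proof (Hslant _ mate_Cvec) as HC.
  pose proof (Hslant _ mate_normal_unit_tangent) as HU.
  split; [|exact HC].
  rewrite HC, <- HU. split; [intros [_ H]; exact H|].
  intros H. exact (conj mate_vD_normal_neq0 H).
Qed.

End OsculatingMate.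

Lemma nonempty_open_interval_open (I : R -> Prop) : nonempty_open_interval I -> open I.
Proof.
  intros [_ [_ HI]] s Hs. destruct (HI s Hs) as [eps [Heps H]].
  exists (mkposreal eps Heps). exact H.
Qed.

Theorem theorem15 (I : R -> Prop) (alpha beta : R -> V3)
  (HI : nonempty_open_interval I)
  (Halpha : unit_speed_frenet_on I alpha)
  (Hbeta : osculating_mate_on I alpha beta) :
  (general_helix_on I (normal beta) <-> C_slant_helix_on I beta) /\
  (C_slant_helix_on I beta <-> slant_helix_on I alpha).
Proof.
  pose proof (nonempty_open_interval_open I HI) as HIo.
  destruct HI as [[s0 Hs0] [Hconv _]].
  destruct Hbeta as [x1 [x2 [Hx1 [Hx2 [Hx12 [HvD [Hperp Hbeta]]]]]]].
  exact (mate_helix_iff I HIo alpha beta x1 x2 Halpha Hbeta Hx1 Hx2 Hx12 HvD Hperp Hconv s0 Hs0).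
Qed.
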